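(* For integers $n,m,N,M$ with $n\ge N$ and $m\ge M$, \[ \sum_{r=N}^n\sum_{s=M}^m q^{n+m-r-s}\,\Phi_{n-r,m-s}\big(zq^{2r-s},wq^{2s-r};q\big)\,\Phi_{r-N,s-M}\big(zq^{2r-s},wq^{2s-r};q^{-1}\big)=\delta_{n,N}\delta_{m,M}. \]
   Context: For $n\in\mathbb{Z}$, $(a;q)_n=(a;q)_\infty/(aq^n;q)_\infty$ (finite product for $n\ge0$; $1/(q;q)_n=0$ for $n<0$), $(a_1,\dots,a_k;q)_n=\prod_i(a_i;q)_n$. For integers $n,m$, \[\Phi_{n,m}(z,w;q):=\frac{(zwq;q)_{n+m}}{(q,zq,zwq;q)_n\,(q,wq,zwq;q)_m},\] a rational function of $z,w,q$; $\Phi_{n,m}(z,w;q^{-1})$ denotes the same expression with $q$ replaced by $q^{-1}$. $\delta$ is the Kronecker delta. *)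

From HB Require Import structures.
From mathcomp Require Import all_boot all_order all_algebra.
Set Implicit Arguments. Unset Strict Implicit. Unset Printing Implicit Defensive.
Import Order.TTheory GRing.Theory Num.Theory.
Local Open Scope ring_scope.

Definition qpoch (F : fieldType) (a q : F) (n : nat) : F :=
  \prod_(i < n) (1 - a * q ^+ i).

(* Phi_{n,m}(z,w;q) for integers n, m; it is 0 if n < 0 or m < 0,
   following the convention 1/(q;q)_n = 0 for n < 0. *)
Definition Phi (F : fieldType) (n m : int) (z w q : F) : F :=
  if (0 <= n) && (0 <= m) then
    let n' := absz n in let m' := absz m in
    qpoch (z * w * q) q (n' + m')
    / (qpoch q q n' * qpoch (z * q) q n' * qpoch (z * w * q) q n'
       * qpoch q q m' * qpoch (w * q) q m' * qpoch (z * w * q) q m')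
  else 0.

Definition zsum (F : fieldType) (a b : int) (f : int -> F) : F :=
  if a <= b then \sum_(k < (absz (b - a)).+1) f (a + k%:Z) else 0.

From HB Require Import structures.
From mathcomp Require Import all_boot all_order all_algebra.
From mathcomp Require Import zify ring.
Import Order.TTheory GRing.Theory Num.Theory.
Local Open Scope ring_scope.
Set Implicit Arguments. Unset Strict Implicit. Unset Printing Implicit Defensive.

(* Shifting (r, s) by (N, M), the sum is the entry at ((n, m), (N, M)) of the
   product A B of two triangular kernels on a box of pairs: A carries
   q^(n+m-r-s) Phi(.; q) and B carries Phi(.; 1/q).  On a finite box a left
   inverse is a right inverse, so it suffices to prove B A = 1.  In an entry of
   B A the arguments z, w no longer depend on the summation indices (k, l), and
   the summand t(k, l) has term ratios in k and in l made of q-binomial ratios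
   and telescoping factors, up to (1 - zw q^(k+l+1)) / (1 - zw q^(k+l)); hence
   (1 - zw) t(k, l) = t(0, 0) u(k) v(l) (1 - zw q^(k+l)).  The double sum thus
   splits into (sum u)(sum v) - zw (sum u q^k)(sum v q^l), which vanishes unless
   the box is a point: each single sum pairs the q-binomial weights w_a(k),
   whose generating function is prod_(i<a) (1 - q^(i+1-a) x), with a
   polynomial in q^k, and is zero as soon as that polynomial has degree less
   than a; on the diagonal a = b this gives sum u = z (sum u q^k). *)

Section QPochhammer.
Variable F : fieldType.
Implicit Types (x p X Y : F).

Lemma qpoch0 x p : qpoch x p 0 = 1.
Proof. by rewrite /qpoch big_ord0. Qed.

Lemma qpochS x p n : qpoch x p n.+1 = qpoch x p n * (1 - x * p ^+ n).
Proof. by rewrite /qpoch big_ord_recr. Qed.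

Lemma qpochD x p m n : qpoch x p (m + n) = qpoch x p m * qpoch (x * p ^+ m) p n.
Proof.
rewrite /qpoch big_split_ord /=; congr (_ * _).
by apply: eq_bigr => i _; rewrite -mulrA -exprD.
Qed.

Lemma qpoch_neq0 x p n :
  (forall i, (i < n)%N -> x * p ^+ i != 1) -> qpoch x p n != 0.
Proof. by move=> h; apply/prodf_neq0 => i _; rewrite subr_eq0 eq_sym h. Qed.

Definition PhiN (n m : nat) X Y p :=
  qpoch (X * Y * p) p (n + m)
  / (qpoch p p n * qpoch (X * p) p n * qpoch (X * Y * p) p n
     * qpoch p p m * qpoch (Y * p) p m * qpoch (X * Y * p) p m).

Lemma Phi_natE n m X Y p : Phi n%:Z m%:Z X Y p = PhiN n m X Y p.
Proof. by rewrite /Phi /PhiN !le0z_nat. Qed.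

Lemma Phi_eq0l (n m : int) X Y p : n < 0 -> Phi n m X Y p = 0.
Proof. by move=> h; rewrite /Phi leNgt h. Qed.

Lemma Phi_eq0r (n m : int) X Y p : m < 0 -> Phi n m X Y p = 0.
Proof. by move=> h; rewrite /Phi (leNgt 0 m) h andbF. Qed.

Lemma PhiN00 X Y p : PhiN 0 0 X Y p = 1.
Proof. by rewrite /PhiN !qpoch0 !mulr1 invr1 mulr1. Qed.

Lemma PhiN_sym n m X Y p : PhiN n m X Y p = PhiN m n Y X p.
Proof. by rewrite /PhiN addnC [Y * X]mulrC; congr (_ / _); ring. Qed.

Lemma PhiN_recl n m X Y p :
  qpoch p p n.+1 != 0 -> qpoch (X * p) p n.+1 != 0 -> qpoch (X * Y * p) p n.+1 != 0 ->
  qpoch p p m != 0 -> qpoch (Y * p) p m != 0 -> qpoch (X * Y * p) p m != 0 ->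
  PhiN n.+1 m X Y p * ((1 - p * p ^+ n) * (1 - X * p * p ^+ n) * (1 - X * Y * p * p ^+ n))
  = PhiN n m X Y p * (1 - X * Y * p * p ^+ (n + m)).
Proof.
rewrite !qpochS !mulf_eq0 !negb_or => /andP[h1 h1'] /andP[h2 h2'] /andP[h3 h3'] h4 h5 h6.
rewrite /PhiN addSn qpochS !qpochS.
by field; rewrite h1 h1' h2 h2' h3 h3' h4 h5 h6.
Qed.
End QPochhammer.

Section Sums.
Variable F : fieldType.

Lemma telescope_prod (f r d : nat -> F) n :
  (forall i, (i < n)%N -> d i != 0) ->
  (forall i, (i < n)%N -> f i.+1 * d i = f i * r i * d i.+1) ->
  f n * d 0%N = f 0%N * \prod_(i < n) r i * d n.
Proof.
elim: n => [|n IH] dn0 rec; first by rewrite big_ord0 mulr1.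
have IHn := IH (fun i hi => dn0 i (ltnW hi)) (fun i hi => rec i (ltnW hi)).
apply: (mulIf (dn0 n (ltnSn n))); rewrite big_ord_recr /=.
transitivity (f n.+1 * d n * d 0%N); first by ring.
rewrite (rec n (ltnSn n)).
transitivity (f n * d 0%N * r n * d n.+1); first by ring.
by rewrite IHn; ring.
Qed.

Lemma coef_mul_1BX (p : {poly F}) c k :
  (p * (1 - c%:P * 'X))`_k = p`_k - (if k is k'.+1 then c * p`_k' else 0).
Proof.
rewrite mulrBr mulr1 coefB mulrA coefMX; case: k => [|k] //=.
by rewrite coefMC mulrC.
Qed.

Lemma size_1BX (c : F) : (size ((1 - c%:P * 'X)%R : {poly F}) <= 2)%N.
Proof.
apply: leq_trans (size_polyD _ _) _; rewrite size_polyN geq_max size_poly1 /=.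
apply: leq_trans (size_polyMleq _ _) _; rewrite size_polyX.
have := size_polyC_leq1 c; lia.
Qed.

Lemma sumr_mul_1B (u : nat -> F) (x c : F) n :
  \sum_(k < n) u k * (1 - c * x ^+ k)
  = \sum_(k < n) u k - c * \sum_(k < n) u k * x ^+ k.
Proof. by rewrite mulr_sumr -sumrB; apply: eq_bigr => k _; ring. Qed.

Lemma sumr_mul2_1B (u v : nat -> F) (x c : F) n n' :
  \sum_(k < n) \sum_(l < n') u k * v l * (1 - c * (x ^+ k * x ^+ l))
  = (\sum_(k < n) u k) * (\sum_(l < n') v l)
    - c * ((\sum_(k < n) u k * x ^+ k) * (\sum_(l < n') v l * x ^+ l)).
Proof.
rewrite !mulr_suml mulr_sumr -sumrB; apply: eq_bigr => k _.
rewrite !mulr_sumr -sumrB; apply: eq_bigr => l _; ring.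
Qed.

Lemma sum_ord_shift (G : nat -> F) n lo hi : (lo <= hi)%N -> (hi <= n)%N ->
  (forall k, (k < lo)%N || (hi < k)%N -> G k = 0) ->
  \sum_(k < n.+1) G k = \sum_(k < (hi - lo).+1) G (lo + k).
Proof.
move=> lohi hin G0.
rewrite -(big_mkord xpredT) (@big_cat_nat _ _ _ lo 0 n.+1) //; last by lia.
rewrite (@big_cat_nat _ _ _ hi.+1 lo n.+1) /=; [|lia|lia].
rewrite [X in X + _]big1_seq ?add0r; last first.
  by move=> k /andP[_]; rewrite mem_index_iota => /andP[_ klo]; rewrite G0 ?klo.
rewrite [X in _ + X]big1_seq ?addr0; last first.
  by move=> k /andP[_]; rewrite mem_index_iota => /andP[hik _]; rewrite G0 ?hik ?orbT.
rewrite -{1}(add0n lo) big_addn big_mkord (_ : (hi.+1 - lo = (hi - lo).+1)%N); last by lia.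
by apply: eq_bigr => k _; rewrite addnC.
Qed.

Lemma sum_inverseC (T : finType) (A B : T -> T -> F) :
  (forall s t, \sum_u A s u * B u t = (s == t)%:R) ->
  forall s t, \sum_u B s u * A u t = (s == t)%:R.
Proof.
move=> AB s t.
pose mx (C : T -> T -> F) : 'M[F]_#|T| := \matrix_(i, j) C (enum_val i) (enum_val j).
have mulmxE C D i j : (mx C *m mx D) i j = \sum_u C (enum_val i) u * D u (enum_val j).
  rewrite mxE (reindex enum_rank) /=; last first.
    by exists enum_val => [u _|k _]; [exact: enum_rankK | exact: enum_valK].
  by apply: eq_bigr => u _; rewrite !mxE enum_rankK.
have /mulmx1C BA : mx A *m mx B = 1%:M.
  by apply/matrixP => i j; rewrite mulmxE AB mxE (inj_eq enum_val_inj).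
have := congr1 (fun C : 'M[F]_#|T| => C (enum_rank s) (enum_rank t)) BA.
by rewrite /= mulmxE mxE !enum_rankK (inj_eq enum_rank_inj).
Qed.

End Sums.

Section GenericQ.
Variables (F : fieldType) (q : F).
Hypothesis q_neq0 : q != 0.
Hypothesis q_not_root1 : forall k : nat, (0 < k)%N -> q ^+ k != 1.

Lemma expfz_neq1 (j : int) : j != 0 -> q ^ j != 1.
Proof.
case: j => [n|n] hn.
  by rewrite -exprnP q_not_root1 // lt0n; apply: contraNneq hn => ->.
by rewrite NegzE -exprz_inv -exprnP exprVn invr_eq1 q_not_root1.
Qed.

Lemma expfz_subr_neq0 (j : int) : j != 0 -> 1 - q ^ j != 0.
Proof. by move=> h; rewrite subr_eq0 eq_sym expfz_neq1. Qed.

Definition generic (X : F) := forall j : int, X * q ^ j != 1.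

Lemma generic_subr_neq0 X j : generic X -> 1 - X * q ^ j != 0.
Proof. by move=> h; rewrite subr_eq0 eq_sym h. Qed.

Lemma mulr_expz X (c d : int) : X * q ^ c * q ^ d = X * q ^ (c + d).
Proof. by rewrite -mulrA -expfzDr. Qed.

Lemma mulr_expz2 X Y (c d : int) : X * q ^ c * (Y * q ^ d) = X * Y * q ^ (c + d).
Proof. by rewrite expfzDr //; ring. Qed.

Lemma generic_mulr_expz X c : generic X -> generic (X * q ^ c).
Proof. by move=> h j; rewrite mulr_expz. Qed.

Lemma expz_mulS (e : int) n : q ^ e * (q ^ e) ^+ n = q ^ (e * (n.+1)%:Z).
Proof. by rewrite -exprS exprnP exprz_exp. Qed.

Lemma mulr_expzS X (c e : int) n :
  X * q ^ c * q ^ e * (q ^ e) ^+ n = X * q ^ (c + e * (n.+1)%:Z).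
Proof. by rewrite -mulrA expz_mulS mulr_expz. Qed.

Lemma qpoch_expz_neq0 (e : int) n : e != 0 -> qpoch (q ^ e) (q ^ e) n != 0.
Proof.
by move=> e0; apply: qpoch_neq0 => i _; rewrite expz_mulS expfz_neq1 // mulf_neq0.
Qed.

Lemma qpoch_generic_neq0 X (c e : int) n :
  generic X -> qpoch (X * q ^ c) (q ^ e) n != 0.
Proof. by move=> gX; apply: qpoch_neq0 => i _; rewrite exprnP exprz_exp mulr_expz. Qed.

Lemma qpoch_mulr_neq0 X n : generic X -> qpoch (X * q) q n != 0.
Proof. by move=> gX; apply: qpoch_neq0 => i _; rewrite -mulrA -exprS exprnP. Qed.

Lemma PhiN_recl_expz (e c d : int) n m X Y :
  e != 0 -> generic X -> generic Y -> generic (X * Y) ->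
  PhiN n.+1 m (X * q ^ c) (Y * q ^ d) (q ^ e)
    * ((1 - q ^ (e * (n.+1)%:Z)) * (1 - X * q ^ (c + e * (n.+1)%:Z))
       * (1 - X * Y * q ^ (c + d + e * (n.+1)%:Z)))
  = PhiN n m (X * q ^ c) (Y * q ^ d) (q ^ e)
    * (1 - X * Y * q ^ (c + d + e * ((n + m).+1)%:Z)).
Proof.
move=> e0 gX gY gXY.
have nzX k : qpoch (X * q ^ c * q ^ e) (q ^ e) k != 0.
  by rewrite mulr_expz qpoch_generic_neq0.
have nzY k : qpoch (Y * q ^ d * q ^ e) (q ^ e) k != 0.
  by rewrite mulr_expz qpoch_generic_neq0.
have nzXY k : qpoch (X * q ^ c * (Y * q ^ d) * q ^ e) (q ^ e) k != 0.
  by rewrite mulr_expz2 mulr_expz qpoch_generic_neq0.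
have := @PhiN_recl _ n m _ _ _ (qpoch_expz_neq0 _ e0) (nzX _) (nzXY _)
                  (qpoch_expz_neq0 _ e0) (nzY _) (nzXY _).
by rewrite mulr_expz2 !mulr_expzS expz_mulS.
Qed.

Definition term (a b : nat) (Z W : F) (k l : nat) :=
  PhiN (a - k) (b - l) (Z * q ^ (2 * a%:Z - b%:Z)) (W * q ^ (2 * b%:Z - a%:Z)) q^-1
  * q ^+ (k + l) * PhiN k l Z W q.

Lemma term_sym a b Z W k l : term a b Z W k l = term b a W Z l k.
Proof. by rewrite /term PhiN_sym [PhiN k l _ _ _]PhiN_sym addnC. Qed.

Definition binom_ratio (a i : nat) := q * (1 - q ^ (i%:Z - a%:Z)) / (1 - q ^ (i.+1)%:Z).
Definition shift_ratio (X : F) (d : int) (i : nat) :=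
  (1 - X * q ^ (d + i%:Z)) / (1 - X * q ^ (i.+1)%:Z).
Definition term_ratio (a b : nat) (X P : F) (i : nat) :=
  binom_ratio a i * shift_ratio X (a%:Z - b%:Z) i * shift_ratio P b%:Z i.
Definition weight (a b : nat) (X P : F) (k : nat) := \prod_(i < k) term_ratio a b X P i.

Lemma PhiN_recl_inv a b Z W k l :
  generic Z -> generic W -> generic (Z * W) -> (k < a)%N -> (l <= b)%N ->
  PhiN (a - k) (b - l) (Z * q ^ (2 * a%:Z - b%:Z)) (W * q ^ (2 * b%:Z - a%:Z)) q^-1
    * ((1 - q ^ (k%:Z - a%:Z)) * (1 - Z * q ^ (a%:Z - b%:Z + k%:Z))
       * (1 - Z * W * q ^ (b%:Z + k%:Z)))
  = PhiN (a - k.+1) (b - l) (Z * q ^ (2 * a%:Z - b%:Z)) (W * q ^ (2 * b%:Z - a%:Z)) q^-1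
    * (1 - Z * W * q ^ (k%:Z + l%:Z)).
Proof.
move=> gZ gW gZW ka lb.
have -> : (a - k = (a - k.+1).+1)%N by lia.
have := @PhiN_recl_expz (-1) (2 * a%:Z - b%:Z) (2 * b%:Z - a%:Z)
  (a - k.+1) (b - l) Z W isT gZ gW gZW.
rewrite exprN1.
by congr (_ * ((1 - q ^ _) * (1 - Z * q ^ _) * (1 - _ * q ^ _)) = _ * (1 - _ * q ^ _)); lia.
Qed.

Lemma PhiN_recl_q k l Z W : generic Z -> generic W -> generic (Z * W) ->
  PhiN k.+1 l Z W q
    * ((1 - q ^ (k.+1)%:Z) * (1 - Z * q ^ (k.+1)%:Z) * (1 - Z * W * q ^ (k.+1)%:Z))
  = PhiN k l Z W q * (1 - Z * W * q ^ ((k.+1)%:Z + l%:Z)).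
Proof.
move=> gZ gW gZW; have := @PhiN_recl_expz 1 0 0 k l Z W isT gZ gW gZW.
by rewrite expr1z expr0z !mulr1 !mul1r !add0r (_ : ((k + l).+1)%:Z = (k.+1)%:Z + l%:Z) //; lia.
Qed.

Lemma term_recl a b Z W k l :
  generic Z -> generic W -> generic (Z * W) -> (k < a)%N -> (l <= b)%N ->
  term a b Z W k.+1 l * (1 - Z * W * q ^ (k%:Z + l%:Z))
  = term a b Z W k l * term_ratio a b Z (Z * W) k
    * (1 - Z * W * q ^ ((k.+1)%:Z + l%:Z)).
Proof.
move=> gZ gW gZW ka lb.
have nN : 1 - Z * W * q ^ (k%:Z + l%:Z) != 0 by exact: generic_subr_neq0.
have nD1 : 1 - q ^ (k.+1)%:Z != 0 by exact: expfz_subr_neq0.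
have nD2 : 1 - Z * q ^ (k.+1)%:Z != 0 by exact: generic_subr_neq0.
have nD3 : 1 - Z * W * q ^ (k.+1)%:Z != 0 by exact: generic_subr_neq0.
rewrite /term; set Z' := Z * _; set W' := W * _.
have -> : PhiN (a - k.+1) (b - l) Z' W' q^-1
    = PhiN (a - k) (b - l) Z' W' q^-1
      * ((1 - q ^ (k%:Z - a%:Z)) * (1 - Z * q ^ (a%:Z - b%:Z + k%:Z))
         * (1 - Z * W * q ^ (b%:Z + k%:Z))) / (1 - Z * W * q ^ (k%:Z + l%:Z)).
  by rewrite PhiN_recl_inv //; field.
have -> : PhiN k.+1 l Z W q = PhiN k l Z W q * (1 - Z * W * q ^ ((k.+1)%:Z + l%:Z))
    / ((1 - q ^ (k.+1)%:Z) * (1 - Z * q ^ (k.+1)%:Z) * (1 - Z * W * q ^ (k.+1)%:Z)).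
  by rewrite -PhiN_recl_q //; field; rewrite nD1 nD2 nD3.
rewrite /term_ratio /binom_ratio /shift_ratio addSn exprS.
by field; rewrite nN nD1 nD2 nD3.
Qed.

Lemma term_recr a b Z W k l :
  generic Z -> generic W -> generic (Z * W) -> (k <= a)%N -> (l < b)%N ->
  term a b Z W k l.+1 * (1 - Z * W * q ^ (k%:Z + l%:Z))
  = term a b Z W k l * term_ratio b a W (Z * W) l
    * (1 - Z * W * q ^ (k%:Z + (l.+1)%:Z)).
Proof.
move=> gZ gW gZW ka lb.
have gWZ : generic (W * Z) by rewrite mulrC.
rewrite !(term_sym a b) [Z * W]mulrC (addrC k%:Z) (addrC k%:Z).
exact: term_recl.
Qed.

Lemma term_factor a b Z W k l :
  generic Z -> generic W -> generic (Z * W) -> (k <= a)%N -> (l <= b)%N ->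
  term a b Z W k l * (1 - Z * W)
  = term a b Z W 0 0 * weight a b Z (Z * W) k * weight b a W (Z * W) l
    * (1 - Z * W * q ^ (k%:Z + l%:Z)).
Proof.
move=> gZ gW gZW ka lb.
have col := @telescope_prod _ (fun i => term a b Z W i 0) (term_ratio a b Z (Z * W))
  (fun i => 1 - Z * W * q ^ (i%:Z + 0%:Z)) k
  (fun i _ => generic_subr_neq0 _ gZW)
  (fun i ik => term_recl gZ gW gZW (leq_trans ik ka) (leq0n b)).
have row := @telescope_prod _ (fun j => term a b Z W k j) (term_ratio b a W (Z * W))
  (fun j => 1 - Z * W * q ^ (k%:Z + j%:Z)) l
  (fun j _ => generic_subr_neq0 _ gZW)
  (fun j jl => term_recr gZ gW gZW ka (leq_trans jl lb)).
move: col row => /=; rewrite (_ : 0%:Z + 0%:Z = 0) // expr0z mulr1 => col row.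
have nz : 1 - Z * W * q ^ (k%:Z + 0%:Z) != 0 by exact: generic_subr_neq0.
apply: (mulIf nz).
transitivity (term a b Z W k l * (1 - Z * W * q ^ (k%:Z + 0%:Z)) * (1 - Z * W));
  first by ring.
rewrite row.
transitivity (term a b Z W k 0 * (1 - Z * W) * \prod_(i < l) term_ratio b a W (Z * W) i
  * (1 - Z * W * q ^ (k%:Z + l%:Z))); first by ring.
by rewrite col /weight; ring.
Qed.

(** * q-binomial orthogonality *)

Definition qbin_poly (a : nat) : {poly F} := \prod_(i < a) (1 - (q ^+ i)%:P * 'X).

Lemma size_qbin_poly a : (size (qbin_poly a) <= a.+1)%N.
Proof.
elim: a => [|a IH]; first by rewrite /qbin_poly big_ord0 size_poly1.
rewrite /qbin_poly big_ord_recr /= -/(qbin_poly a); apply: leq_trans (size_polyMleq _ _) _.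
have := size_1BX (q ^+ a); move: IH; lia.
Qed.

Lemma horner_qbin_poly a y : (qbin_poly a).[y] = \prod_(i < a) (1 - q ^+ i * y).
Proof. by rewrite horner_prod; apply: eq_bigr => i _; rewrite !hornerE. Qed.

Lemma qbin_poly_coef0 a : (qbin_poly a)`_0 = 1.
Proof. by rewrite -horner_coef0 horner_qbin_poly big1 // => i _; rewrite mulr0 subr0. Qed.

Lemma coef_qbin_poly_dilate a k :
  (\prod_(i < a) (1 - (q ^+ i.+1)%:P * 'X))`_k = q ^+ k * (qbin_poly a)`_k.
Proof.
elim: a k => [|a IH] k.
  by rewrite /qbin_poly !big_ord0 coef1; case: k => [|k] /=; rewrite ?mul1r ?mulr0.
rewrite /qbin_poly !big_ord_recr /= !coef_mul_1BX IH.
by case: k => [|k]; rewrite ?subr0 // IH !exprS; ring.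
Qed.

(* Compare the coefficients of X^(k+1) in the two factorisations
   qbin_poly a.+1 = qbin_poly a * (1 - q^a X) = (1 - X) * qbin_poly a (qX). *)
Lemma qbin_poly_coefS a k :
  (qbin_poly a)`_k.+1 * (q ^+ k.+1 - 1) = (q ^+ k - q ^+ a) * (qbin_poly a)`_k.
Proof.
have split1 : qbin_poly a.+1 = (1 - 'X) * \prod_(i < a) (1 - (q ^+ i.+1)%:P * 'X).
  by rewrite /qbin_poly big_ord_recl /= expr0 polyC1 mul1r.
have := congr1 (fun p : {poly F} => p`_k.+1) split1.
rewrite /= {1}/qbin_poly big_ord_recr /= coef_mul_1BX mulrBl mul1r coefB coefXM /=.
rewrite !coef_qbin_poly_dilate -/(qbin_poly a).
set c0 := (qbin_poly a)`_k; set c1 := (qbin_poly a)`_k.+1 => h.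
by apply/eqP; rewrite -subr_eq0 -(subrr (c1 - q ^+ a * c0)) {1}h; apply/eqP; ring.
Qed.

Definition binom_weight (a k : nat) := \prod_(i < k) binom_ratio a i.

Lemma binom_weightE a k : binom_weight a k = (qbin_poly a)`_k * (q ^ (1 - a%:Z)) ^+ k.
Proof.
elim: k => [|k IH]; first by rewrite /binom_weight big_ord0 qbin_poly_coef0 expr0 mulr1.
rewrite /binom_weight big_ord_recr /= -/(binom_weight a k) IH /binom_ratio.
have nk : q ^+ k.+1 - 1 != 0 by rewrite subr_eq0 q_not_root1.
have nk' : 1 - q ^+ k.+1 != 0 by rewrite subr_eq0 eq_sym q_not_root1.
have na : q ^+ a != 0 by rewrite expf_neq0.
have -> : (qbin_poly a)`_k.+1
    = (q ^+ k - q ^+ a) * (qbin_poly a)`_k / (q ^+ k.+1 - 1).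
  by rewrite -qbin_poly_coefS; field.
rewrite (_ : q ^ (k%:Z - a%:Z) = q ^+ k / q ^+ a); last by rewrite expfzDr // -exprnN.
rewrite -exprnP (_ : q ^ (1 - a%:Z) = q / q ^+ a); last by rewrite expfzDr // -exprnN expr1z.
rewrite exprS [in RHS]exprS.
by field; rewrite -exprS na nk nk'.
Qed.

Lemma sum_binom_weight_expn a j :
  (j < a)%N -> \sum_(k < a.+1) binom_weight a k * (q ^+ j) ^+ k = 0.
Proof.
move=> ja.
under eq_bigr do rewrite binom_weightE -mulrA -exprMn.
rewrite -horner_coef_wide ?size_qbin_poly // horner_qbin_poly.
apply/eqP; rewrite prodf_seq_eq0; apply/hasP.
have ia : (a - 1 - j < a)%N by lia.
exists (Ordinal ia); first by rewrite mem_index_enum.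
(* the factor i = a - 1 - j vanishes at q^(1 - a + j) *)
rewrite /= subr_eq0 eq_sym !exprnP mulrA -!expfzDr //.
by rewrite (_ : (a - 1 - j)%N%:Z + (1 - a%:Z) + j%:Z = 0) //; lia.
Qed.

Lemma sum_binom_weight_prod a (s : seq F) j : (j + size s < a)%N ->
  \sum_(k < a.+1) binom_weight a k * (q ^+ j) ^+ k * \prod_(x <- s) (1 - x * q ^+ k) = 0.
Proof.
elim: s j => [|x s IH] j /= hj.
  by under eq_bigr do rewrite big_nil mulr1; apply: sum_binom_weight_expn; lia.
transitivity (\sum_(k < a.+1) binom_weight a k * (q ^+ j) ^+ k * \prod_(y <- s) (1 - y * q ^+ k)
    - x * \sum_(k < a.+1) binom_weight a k * (q ^+ j.+1) ^+ k
          * \prod_(y <- s) (1 - y * q ^+ k)).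
  rewrite mulr_sumr -sumrB; apply: eq_bigr => k _.
  by rewrite big_cons exprS exprMn; ring.
by rewrite !IH ?mulr0 ?subr0 //; lia.
Qed.

Definition shift_roots (X : F) (d : nat) := [seq X * q ^+ i.+1 | i <- iota 0 d].

Lemma prod_shift_ratio X d k : generic X ->
  \prod_(i < k) shift_ratio X (d.+1)%:Z i
  = \prod_(x <- shift_roots X d) (1 - x * q ^+ k) / qpoch (X * q) q d.
Proof.
move=> gX.
have -> : \prod_(i < k) shift_ratio X (d.+1)%:Z i
    = qpoch (X * q * q ^+ d) q k / qpoch (X * q) q k.
  rewrite /shift_ratio prodf_div /qpoch; congr (_ / _); apply: eq_bigr => i _.
    by rewrite -!mulrA -exprD -exprS exprnP; congr (1 - X * q ^ _); lia.
  by rewrite -mulrA -exprS exprnP.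
have -> : \prod_(x <- shift_roots X d) (1 - x * q ^+ k) = qpoch (X * q * q ^+ k) q d.
  rewrite /shift_roots big_map /qpoch.
  have -> : iota 0 d = index_iota 0 d by rewrite /index_iota subn0.
  rewrite big_mkord.
  apply: eq_bigr => i _; rewrite -!mulrA -!exprD -exprS.
  by congr (1 - X * q ^+ _); lia.
have nk := qpoch_mulr_neq0 k gX; have nd := qpoch_mulr_neq0 d gX.
by apply/eqP; rewrite eqr_div // mulrC -qpochD addnC qpochD mulrC.
Qed.

Lemma prod_shift_ratio0 X k : generic X ->
  \prod_(i < k) shift_ratio X 0 i * (1 - X * q ^+ k) = 1 - X.
Proof.
move=> gX; elim: k => [|k IH]; first by rewrite big_ord0 mul1r expr0 mulr1.
rewrite big_ord_recr /= /shift_ratio add0r -!exprnP -[RHS]IH.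
have nz : 1 - X * q ^+ k.+1 != 0 by rewrite exprnP generic_subr_neq0.
by field.
Qed.

Lemma weight_split a b X P k :
  weight a b X P k = binom_weight a k
    * \prod_(i < k) shift_ratio X (a%:Z - b%:Z) i * \prod_(i < k) shift_ratio P b%:Z i.
Proof. by rewrite /weight /term_ratio /binom_weight !big_split. Qed.

Lemma weight_sum_eq0 a b X P c : generic X -> generic P -> (0 < b)%N -> (b < a)%N ->
  \sum_(k < a.+1) weight a b X P k * (1 - c * q ^+ k) = 0.
Proof.
move=> gX gP b0 ba.
set d1 := (a - b).-1; set d2 := b.-1.
have e1 : a%:Z - b%:Z = (d1.+1)%:Z by rewrite /d1; lia.
have e2 : b%:Z = (d2.+1)%:Z by rewrite /d2; lia.
have nz1 := qpoch_mulr_neq0 d1 gX; have nz2 := qpoch_mulr_neq0 d2 gP.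
under eq_bigr => k _.
  rewrite weight_split e1 e2 !prod_shift_ratio //.
  have -> : binom_weight a k * (\prod_(x <- shift_roots X d1) (1 - x * q ^+ k)
      / qpoch (X * q) q d1) * (\prod_(x <- shift_roots P d2) (1 - x * q ^+ k)
      / qpoch (P * q) q d2) * (1 - c * q ^+ k)
    = binom_weight a k * (q ^+ 0) ^+ k
      * \prod_(x <- shift_roots X d1 ++ shift_roots P d2 ++ [:: c]) (1 - x * q ^+ k)
      / (qpoch (X * q) q d1 * qpoch (P * q) q d2).
    by rewrite !big_cat big_seq1 /= expr1n; field; rewrite nz1 nz2.
  over.
rewrite -mulr_suml sum_binom_weight_prod ?mul0r //.
by rewrite !size_cat !size_map !size_iota /=; lia.
Qed.

Lemma weight0_sum_eq0 a X P : generic X -> generic P -> (0 < a)%N ->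
  \sum_(k < a.+1) weight a 0 X P k * (1 - P * q ^+ k) = 0.
Proof.
move=> gX gP a0; set d := a.-1.
have e : a%:Z - 0%:Z = (d.+1)%:Z by rewrite /d; lia.
have nz := qpoch_mulr_neq0 d gX.
under eq_bigr => k _.
  rewrite weight_split e prod_shift_ratio // -mulrA prod_shift_ratio0 //.
  have -> : binom_weight a k * (\prod_(x <- shift_roots X d) (1 - x * q ^+ k)
      / qpoch (X * q) q d) * (1 - P)
    = binom_weight a k * (q ^+ 0) ^+ k * \prod_(x <- shift_roots X d) (1 - x * q ^+ k)
      * ((1 - P) / qpoch (X * q) q d).
    by rewrite expr1n; field.
  over.
rewrite -mulr_suml sum_binom_weight_prod ?mul0r //.
by rewrite size_map size_iota; lia.
Qed.

Lemma weight_diag_sum_eq0 a X P : generic X -> generic P -> (0 < a)%N ->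
  \sum_(k < a.+1) weight a a X P k * (1 - X * q ^+ k) = 0.
Proof.
move=> gX gP a0; rewrite -[RHS](weight0_sum_eq0 gP gX a0).
apply: eq_bigr => k _; congr (_ * _); apply: eq_bigr => i _.
by rewrite /term_ratio subrr subr0; ring.
Qed.

Lemma weight_at0 a b X P : weight a b X P 0 = 1.
Proof. by rewrite /weight big_ord0. Qed.

Lemma weight_sums_eq0 a b Z W :
  generic Z -> generic W -> generic (Z * W) -> ~~ ((a == 0%N) && (b == 0%N)) ->
  (\sum_(k < a.+1) weight a b Z (Z * W) k) * (\sum_(l < b.+1) weight b a W (Z * W) l)
  - Z * W * ((\sum_(k < a.+1) weight a b Z (Z * W) k * q ^+ k)
             * (\sum_(l < b.+1) weight b a W (Z * W) l * q ^+ l)) = 0.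
Proof.
wlog ab : a b Z W / (a <= b)%N => [hwlog gZ gW gZW nz|].
  case: (leqP a b) => [ab | /ltnW ba]; first exact: hwlog.
  have gWZ : generic (W * Z) by rewrite mulrC.
  have := hwlog b a W Z ba gW gZ gWZ; rewrite [W * Z]mulrC andbC => /(_ nz) h.
  by apply: (etrans _ h); ring.
move=> gZ gW gZW nz.
move: ab; rewrite leq_eqVlt => /orP[/eqP ab | ab].
  subst b; have a0 : (0 < a)%N by move: nz; rewrite andbb lt0n.
  have /eqP := weight_diag_sum_eq0 gZ gZW a0.
  have /eqP := weight_diag_sum_eq0 gW gZW a0.
  rewrite !sumr_mul_1B !subr_eq0 => /eqP -> /eqP ->; ring.
have [a0|a0] := posnP a.
  subst a; rewrite !big_ord1 !weight_at0 expr0 !mul1r -sumr_mul_1B.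
  exact: weight0_sum_eq0.
have sum0 : \sum_(l < b.+1) weight b a W (Z * W) l = 0.
  by have := weight_sum_eq0 0 gW gZW a0 ab; rewrite sumr_mul_1B mul0r subr0.
have sum1 : \sum_(l < b.+1) weight b a W (Z * W) l * q ^+ l = 0.
  have := weight_sum_eq0 1 gW gZW a0 ab; rewrite sumr_mul_1B sum0 mul1r sub0r.
  by move/eqP; rewrite oppr_eq0 => /eqP.
by rewrite sum0 sum1 !mulr0 subr0.
Qed.

Lemma sum_term a b Z W : generic Z -> generic W -> generic (Z * W) ->
  \sum_(k < a.+1) \sum_(l < b.+1) term a b Z W k l = ((a == 0%N) && (b == 0%N))%:R.
Proof.
move=> gZ gW gZW.
have [/andP[/eqP -> /eqP ->] | nz] := boolP ((a == 0%N) && (b == 0%N)).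
  by rewrite !big_ord1 /term subnn addn0 expr0 mulr1 !PhiN00 mulr1.
have nP : 1 - Z * W != 0 by have := generic_subr_neq0 0 gZW; rewrite expr0z mulr1.
transitivity (term a b Z W 0 0 / (1 - Z * W) * \sum_(k < a.+1) \sum_(l < b.+1)
    weight a b Z (Z * W) k * weight b a W (Z * W) l * (1 - Z * W * (q ^+ k * q ^+ l))).
  rewrite mulr_sumr; apply: eq_bigr => k _; rewrite mulr_sumr; apply: eq_bigr => l _.
  apply: (mulIf nP); rewrite term_factor ?leq_ord // expfzDr // -!exprnP.
  by field.
by rewrite sumr_mul2_1B weight_sums_eq0 // mulr0.
Qed.

Definition kernelA (z w : F) (i j k l : nat) :=
  q ^ ((i + j)%N%:Z - (k + l)%N%:Z)
  * Phi (i%:Z - k%:Z) (j%:Z - l%:Z) (z * q ^ (2 * k%:Z - l%:Z)) (w * q ^ (2 * l%:Z - k%:Z)) q.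

Definition kernelB (z w : F) (i j k l : nat) :=
  Phi (i%:Z - k%:Z) (j%:Z - l%:Z) (z * q ^ (2 * i%:Z - j%:Z)) (w * q ^ (2 * j%:Z - i%:Z)) q^-1.

Lemma kernelBA_eq0 z w i j k l i' j' :
  [|| (i < k)%N, (k < i')%N, (j < l)%N | (l < j')%N] ->
  kernelB z w i j k l * kernelA z w k l i' j' = 0.
Proof.
rewrite /kernelB /kernelA => /or4P[h|h|h|h].
- by rewrite Phi_eq0l ?mul0r //; lia.
- by rewrite [Phi (k%:Z - _) _ _ _ _]Phi_eq0l ?mulr0 //; lia.
- by rewrite Phi_eq0r ?mul0r //; lia.
- by rewrite [Phi (k%:Z - _) _ _ _ _]Phi_eq0r ?mulr0 //; lia.
Qed.

Lemma kernelBA_term z w i j i' j' k l :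
  (i' + k <= i)%N -> (j' + l <= j)%N ->
  kernelB z w i j (i' + k) (j' + l) * kernelA z w (i' + k) (j' + l) i' j'
  = term (i - i') (j - j') (z * q ^ (2 * i'%:Z - j'%:Z)) (w * q ^ (2 * j'%:Z - i'%:Z)) k l.
Proof.
move=> hk hl; rewrite /kernelB /kernelA /term.
rewrite (_ : i%:Z - (i' + k)%N%:Z = (i - i' - k)%N%:Z); last by lia.
rewrite (_ : j%:Z - (j' + l)%N%:Z = (j - j' - l)%N%:Z); last by lia.
rewrite (_ : (i' + k)%N%:Z - i'%:Z = k%:Z); last by lia.
rewrite (_ : (j' + l)%N%:Z - j'%:Z = l%:Z); last by lia.
rewrite !Phi_natE mulrA !mulr_expz exprnP.
by congr (PhiN _ _ (z * q ^ _) (w * q ^ _) _ * q ^ _ * _); lia.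
Qed.

Lemma kernel_sum_BA z w a b i j i' j' :
  generic z -> generic w -> generic (z * w) -> (i <= a)%N -> (j <= b)%N ->
  \sum_(k < a.+1) \sum_(l < b.+1) kernelB z w i j k l * kernelA z w k l i' j'
  = ((i == i') && (j == j'))%:R.
Proof.
move=> gz gw gzw ia jb.
have [/andP[ii jj]|nle] := boolP ((i' <= i) && (j' <= j))%N; last first.
  rewrite (_ : (i == i') && (j == j') = false); last first.
    by apply/negbTE; apply: contra nle => /andP[/eqP -> /eqP ->]; rewrite !leqnn.
  apply: big1 => k _; apply: big1 => l _; apply: kernelBA_eq0.
  by move: nle; rewrite negb_and -!ltnNge => /orP[] h;
     case: (ltnP i k) => //= ik; case: (ltnP j l) => //= jl; rewrite ?orbT //; lia.
have gzw' : generic (z * q ^ (2 * i'%:Z - j'%:Z) * (w * q ^ (2 * j'%:Z - i'%:Z))).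
  by rewrite mulr_expz2; apply: generic_mulr_expz.
rewrite (_ : (i == i') && (j == j') = (i - i' == 0)%N && (j - j' == 0)%N); last first.
  by rewrite !subn_eq0 !eqn_leq ii jj !andbT.
rewrite -(sum_term _ _ (generic_mulr_expz _ gz) (generic_mulr_expz _ gw) gzw').
rewrite (sum_ord_shift
    (G := fun k => \sum_(l < b.+1) kernelB z w i j k l * kernelA z w k l i' j') ii ia); last first.
  by move=> k /orP[] hk; apply: big1 => l _; apply: kernelBA_eq0; rewrite hk ?orTb ?orbT.
apply: eq_bigr => k _.
rewrite (sum_ord_shift
    (G := fun l => kernelB z w i j (i' + k) l * kernelA z w (i' + k) l i' j') jj jb); last first.
  by move=> l /orP[] hl; apply: kernelBA_eq0; rewrite hl ?orTb ?orbT.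
apply: eq_bigr => l _; apply: kernelBA_term.
- by have := ltn_ord k; lia.
- by have := ltn_ord l; lia.
Qed.

Lemma kernel_sum_AB z w a b : generic z -> generic w -> generic (z * w) ->
  \sum_(k < a.+1) \sum_(l < b.+1) kernelA z w a b k l * kernelB z w k l 0 0
  = ((a == 0%N) && (b == 0%N))%:R.
Proof.
move=> gz gw gzw.
pose A (x y : 'I_a.+1 * 'I_b.+1) := kernelA z w x.1 x.2 y.1 y.2.
pose B (x y : 'I_a.+1 * 'I_b.+1) := kernelB z w x.1 x.2 y.1 y.2.
have BA x y : \sum_u B x u * A u y = (x == y)%:R.
  by rewrite -(pair_bigA _ (fun k l => B x (k, l) * A (k, l) y)) kernel_sum_BA ?leq_ord.
have := sum_inverseC BA (ord_max, ord_max) (ord0, ord0).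
by rewrite -(pair_bigA _ (fun k l => A (ord_max, ord_max) (k, l) * B (k, l) (ord0, ord0))).
Qed.

End GenericQ.

Theorem proposition4p1 (F : fieldType) (z w q : F)
    (hq0 : q != 0)
    (hq : forall k : nat, (0 < k)%N -> q ^+ k != 1)
    (hz : forall j : int, z * q ^ j != 1)
    (hw : forall j : int, w * q ^ j != 1)
    (hzw : forall j : int, z * w * q ^ j != 1)
    (n m N M : int) (hnN : N <= n) (hmM : M <= m) :
  zsum N n (fun r => zsum M m (fun s =>
      q ^ (n + m - r - s)
      * Phi (n - r) (m - s) (z * q ^ (2 * r - s)) (w * q ^ (2 * s - r)) q
      * Phi (r - N) (s - M) (z * q ^ (2 * r - s)) (w * q ^ (2 * s - r)) q^-1))
  = (n == N)%:R * (m == M)%:R.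
Proof.
set a := `|n - N|%N; set b := `|m - M|%N.
have en : n = N + a%:Z by rewrite /a; lia.
have em : m = M + b%:Z by rewrite /b; lia.
set z0 := z * q ^ (2 * N - M); set w0 := w * q ^ (2 * M - N).
have gz : generic q z0 by exact: generic_mulr_expz.
have gw : generic q w0 by exact: generic_mulr_expz.
have gzw : generic q (z0 * w0) by rewrite mulr_expz2 //; exact: generic_mulr_expz.
have -> : (n == N)%:R * (m == M)%:R = ((a == 0%N) && (b == 0%N))%:R :> F.
  by rewrite -natrM mulnb; congr (_ && _)%:R; apply/eqP/eqP; lia.
rewrite -(kernel_sum_AB hq0 hq a b gz gw gzw) /zsum hnN hmM -/a -/b.
apply: eq_bigr => k _; apply: eq_bigr => l _.
rewrite /kernelA /kernelB /z0 /w0 !mulr_expz //.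
by congr (q ^ _ * Phi _ _ (z * q ^ _) (w * q ^ _) _ * Phi _ _ (z * q ^ _) (w * q ^ _) _); lia.
Qed.
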